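(* Let two probabilistically equivalent models (each one of the linear dynamic models described in the context) be written in stacked form as $$T_1x=v,\qquad T_2y=w,$$ where $x,y$ are zero-mean nonsingular Gaussian sequences over $[0,N]$, $T_1,T_2$ are nonsingular matrices determined by the model parameters, and $v,w$ are the zero-mean Gaussian vectors of dynamic noise and boundary values with nonsingular covariances $\mathrm{Cov}(v)=P_1$, $\mathrm{Cov}(w)=P_2$. If $$T_2'P_2^{-1}w=T_1'P_1^{-1}v,$$ then the two models are algebraically equivalent, i.e. $x=y$.
   Context: Sequences are indexed by $[0,N]=(0,1,\ldots,N)$, $x_k\in\mathbb{R}^d$, $'$ denotes transpose. The models considered are linear dynamic models of the following types: forward/backward Markov, reciprocal ($R^0_kx_k-R^-_kx_{k-1}-R^+_kx_{k+1}=e^R_k$ plus boundary equations), and forward/backward $CM_L$ and $CM_F$ models ($x_k=G_{k,k-1}x_{k-1}+G_{k,c}x_c+e_k$, $c\in\{0,N\}$, plus boundary equations); each such model with its boundary condition can be written as $Tx=v$, $T$ nonsingular, $v$ stacking the dynamic noise and boundary values. Two models $T_1x=v$, $T_2y=w$ are probabilistically equivalent (PE) if $x$ and $y$ have the same distribution (equivalently $T_2'P_2^{-1}T_2=T_1'P_1^{-1}T_1$), and algebraically equivalent (AE) if $x=y$ (path-wise). *)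

From HB Require Import structures.
From mathcomp Require Import all_boot all_order all_algebra.
Set Implicit Arguments. Unset Strict Implicit. Unset Printing Implicit Defensive.
Import Order.TTheory GRing.Theory Num.Theory.
Local Open Scope ring_scope.

(* Stacked sequences over [0,N] with x_k in R^d: column vectors of size
   d * (N+1). *)
Definition stack_dim (d N : nat) : nat := (d * N.+1)%N.

Definition stacked_model (R : realFieldType) (n : nat)
  (T P : 'M[R]_n) : Prop :=
  T \in unitmx /\ P \in unitmx /\ P^T = P.

(* Probabilistic equivalence of T1 x = v (Cov v = P1) and T2 y = w
   (Cov w = P2), in the form given in the paper's context:
   T2' P2^{-1} T2 = T1' P1^{-1} T1. *)
Definition prob_equiv (R : realFieldType) (n : nat)
  (T1 P1 T2 P2 : 'M[R]_n) : Prop :=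
  T2^T *m invmx P2 *m T2 = T1^T *m invmx P1 *m T1.

Definition alg_equiv (Omega : Type) (R : realFieldType) (n : nat)
  (x y : Omega -> 'cV[R]_n) : Prop :=
  forall omega, x omega = y omega.

From HB Require Import structures.
From mathcomp Require Import all_boot all_order all_algebra.
Set Implicit Arguments. Unset Strict Implicit. Unset Printing Implicit Defensive.
Import Order.TTheory GRing.Theory Num.Theory.
Local Open Scope ring_scope.

Lemma unitmx_tr_inv_mul (R : comUnitRingType) (n : nat) (T P : 'M[R]_n) :
  T \in unitmx -> P \in unitmx -> T^T *m invmx P *m T \in unitmx.
Proof. by move=> UT UP; rewrite !unitmx_mul unitmx_tr unitmx_inv UT UP. Qed.

Lemma mulmx_tr_inv_model (R : comUnitRingType) (n : nat) (T P : 'M[R]_n)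
    (x v : 'cV[R]_n) :
  T *m x = v -> T^T *m invmx P *m T *m x = T^T *m invmx P *m v.
Proof. by rewrite -mulmxA => ->. Qed.

Theorem proposition2 (R : realFieldType) (Omega : Type) (d N : nat)
  (T1 P1 T2 P2 : 'M[R]_(stack_dim d N))
  (x y v w : Omega -> 'cV[R]_(stack_dim d N)) :
  stacked_model T1 P1 -> stacked_model T2 P2 ->
  (forall omega, T1 *m x omega = v omega) ->
  (forall omega, T2 *m y omega = w omega) ->
  prob_equiv T1 P1 T2 P2 ->
  (forall omega, T2^T *m invmx P2 *m w omega = T1^T *m invmx P1 *m v omega) ->
  alg_equiv x y.
Proof.
move=> [unitT1 [unitP1 _]] _ modelx modely equivTP equivvw omega.
apply: (can_inj (mulKmx (unitmx_tr_inv_mul unitT1 unitP1))).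
rewrite (mulmx_tr_inv_model _ (modelx omega)) -equivvw -equivTP.
by rewrite (mulmx_tr_inv_model _ (modely omega)).
Qed.
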